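(* Let $\mathcal{F}\subseteq\mathcal{B}_n$, let $q$ be a positive integer, let $\varepsilon>0$, let $\mathcal{T}$ be a $q$-strong $1$-marked chain family from $\mathcal{F}$, and let $\mathcal{M}=\mathcal{T}[q]$. For $i\in[q]$ and $\chi\in\mathcal{C}$ let $\mathcal{L}^i(\mathcal{M},\chi)$ be the set of $F\in\mathcal{F}$ for which there is $(\chi,Q)\in\mathcal{M}$ such that $F$ is the $i$-th member of $Q$, and let $\mathcal{L}^i(\mathcal{M})=\bigcup_{\chi\in\mathcal{C}}\mathcal{L}^i(\mathcal{M},\chi)$. If $|\mathcal{T}|\geq\varepsilon\, n!$, then for each $i\in[q]$, $$|\mathcal{L}^i(\mathcal{M})|\geq\frac{\varepsilon}{q}\min_{F\in\mathcal{F}}\binom{n}{|F|}.$$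
   Context: $\mathcal{B}_n$ is the family of all subsets of $[n]$. $\mathcal{C}$ is the set of all full chains $\emptyset=C_0\subsetneq C_1\subsetneq\cdots\subsetneq C_n=[n]$ (identified with their sets of members). A $1$-marked chain from $\mathcal{F}$ is a pair $(\chi,F)$ with $\chi\in\mathcal{C}$, $F\in\mathcal{F}\cap\chi$; for a family $\mathcal{T}$ of such pairs, $\mathcal{T}(\chi)=\{F:(\chi,F)\in\mathcal{T}\}$, and $\mathcal{T}$ is $q$-strong if $|\mathcal{T}(\chi)|\ge q$ whenever $\mathcal{T}(\chi)\neq\emptyset$. A $q$-chain is a tuple $(F_1,\dots,F_q)$ with $F_1\supsetneq F_2\supsetneq\cdots\supsetneq F_q$; its $i$-th member is $F_i$. A $q$-marked chain is a pair $(\chi,Q)$ with $\chi\in\mathcal{C}$ and $Q$ a $q$-chain all of whose members lie on $\chi$. The $q$-th power of $\mathcal{T}$ is $\mathcal{T}[q]=\{(\chi,Q): Q \text{ a } q\text{-element subset of }\mathcal{T}(\chi)\}$, where each such $Q$ is viewed as a $q$-chain ordered by decreasing size. *)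

From HB Require Import structures.
From mathcomp Require Import all_boot all_order all_algebra.
Set Implicit Arguments. Unset Strict Implicit. Unset Printing Implicit Defensive.

(* Subsets of [n] are {set 'I_n}; a chain is identified with its set of members. *)
Notation subsetT n := {set 'I_n}.
Notation chainT n := {set {set 'I_n}}.

Definition full_chain (n : nat) (chi : chainT n) : bool :=
  [exists C : {ffun 'I_n.+1 -> {set 'I_n}},
    [&& C ord0 == set0, C ord_max == setT,
        [forall k : 'I_n, C (widen_ord (leqnSn n) k) \proper C (lift ord0 k)]
      & chi == [set C k | k : 'I_n.+1]]].

Definition marked_family (n : nat) (Fam : {set {set 'I_n}})
  (T : {set (chainT n * {set 'I_n})}) : Prop :=
  forall p, p \in T -> [/\ full_chain p.1, p.2 \in Fam & p.2 \in p.1].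

Definition Tsec (n : nat) (T : {set (chainT n * {set 'I_n})}) (chi : chainT n)
  : {set {set 'I_n}} := [set F | (chi, F) \in T].

Definition q_strong (n q : nat) (T : {set (chainT n * {set 'I_n})}) : Prop :=
  forall chi, Tsec T chi != set0 -> q <= #|Tsec T chi|.

Definition power (n : nat) (T : {set (chainT n * {set 'I_n})}) (q : nat)
  : {set (chainT n * {set {set 'I_n}})} :=
  [set p : chainT n * {set {set 'I_n}} | (p.2 \subset Tsec T p.1) && (#|p.2| == q)].

(* Q viewed as a chain ordered by decreasing size *)
Definition as_chain (n : nat) (Q : {set {set 'I_n}}) : seq {set 'I_n} :=
  sort (fun A B : {set 'I_n} => #|B| <= #|A|) (enum Q).

(* i-th member (1-indexed) *)
Definition ith_member (n : nat) (Q : {set {set 'I_n}}) (i : nat) : {set 'I_n} :=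
  nth set0 (as_chain Q) i.-1.

Definition Lchi (n : nat) (Fam : {set {set 'I_n}})
  (M : {set (chainT n * {set {set 'I_n}})}) (i : nat) (chi : chainT n)
  : {set {set 'I_n}} :=
  [set F in Fam | [exists Q, ((chi, Q) \in M) && (ith_member Q i == F)]].

Definition Lall (n : nat) (Fam : {set {set 'I_n}})
  (M : {set (chainT n * {set {set 'I_n}})}) (i : nat) : {set {set 'I_n}} :=
  \bigcup_(chi : chainT n | full_chain chi) Lchi Fam M i chi.

From HB Require Import structures.
From mathcomp Require Import all_boot all_order all_algebra fingroup perm.
From mathcomp Require Import zify.
Import Order.TTheory GRing.Theory Num.Theory.
Set Implicit Arguments. Unset Strict Implicit. Unset Printing Implicit Defensive.

(* On a full chain chi the members of T(chi) have distinct sizes.  A member F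
   of T(chi) is the i-th member of some q-subset as soon as at least i - 1
   members of T(chi) are larger and at least q - i are smaller than F; at most
   q - 1 members fail this, so |T(chi)| >= q gives |T(chi)| <= q |L^i(M, chi)|.
   Summing over chi counts each F in L^i(M) once per full chain through F.
   Full chains are the images of the initial segments {0, ..., k - 1} under
   permutations, and relabelling by a permutation shows that all k-sets lie on
   equally many full chains, hence each on at most n! / C(n, k). *)

Lemma sum_card_sections (A B : finType) (r : A -> B -> bool) :
  \sum_a #|[set b | r a b]| = \sum_b #|[set a | r a b]|.
Proof.
under eq_bigr do rewrite -sum1dep_card.
rewrite (exchange_big_dep predT) //.
by apply: eq_bigr => b _; rewrite sum1dep_card.
Qed.

Lemma card_set_pair (A B : finType) (S : {set A * B}) :
  #|S| = \sum_a #|[set b | (a, b) \in S]|.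
Proof.
rewrite -sum1_card; symmetry; under eq_bigr do rewrite -sum1dep_card.
by rewrite pair_big_dep; apply: eq_bigl => -[a b].
Qed.

Lemma exists_subset_card (T : finType) (A : {set T}) k :
  k <= #|A| -> exists2 B : {set T}, B \subset A & #|B| = k.
Proof.
rewrite -bin_gt0 -cards_draws => /card_gt0P[B /[!inE] /andP[BA /eqP Bk]].
by exists B.
Qed.

Lemma exists_perm_imset (T : finType) (A B : {set T}) :
  #|A| = #|B| -> exists s : {perm T}, s @: A = B.
Proof.
(* Enumerate T listing A first, and B first; s matches positions. *)
move=> AB; pose split_enum (C : {set T}) := enum C ++ enum (~: C).
have size_split C : size (split_enum C) = #|T|.
  by rewrite size_cat -!cardE cardsC.
have mem_split C x : x \in split_enum C by rewrite mem_cat !mem_enum inE orbN.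
have uniq_split C : uniq (split_enum C).
  rewrite cat_uniq !enum_uniq andbT /=; apply/hasPn => x.
  by rewrite !mem_enum inE.
pose p x := nth x (split_enum B) (index x (split_enum A)).
have lt_index x : index x (split_enum A) < size (split_enum B).
  by rewrite size_split -(size_split A) index_mem.
have p_inj : injective p.
  move=> x y; rewrite /p (set_nth_default y) // => /eqP.
  rewrite nth_uniq // => /eqP idx_xy.
  by have := nth_index x (mem_split A y); rewrite -idx_xy nth_index.
exists (perm p_inj); apply/eqP; rewrite eqEcard card_imset; last exact: perm_inj.
rewrite AB leqnn andbT.
apply/subsetP => _ /imsetP[x xA ->]; rewrite permE /p /split_enum index_cat mem_enum xA.
have lt_xB : index x (enum A) < size (enum B).
  by rewrite -cardE -AB cardE index_mem mem_enum.
by rewrite nth_cat lt_xB -mem_enum mem_nth.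
Qed.

Section Weights.

Variables (T : finType) (w : T -> nat) (S : {set T}).

Definition above x := [set y in S | w x < w y].
Definition below x := [set y in S | w y < w x].

Lemma above_proper x y : x \in S -> w y < w x -> above x \proper above y.
Proof.
move=> xS yx; apply/properP; split.
  by apply/subsetP => z; rewrite !inE => /andP[-> /= xz]; apply: ltn_trans xz.
by exists x; rewrite !inE ?xS ?yx // ltnn.
Qed.

Hypothesis w_inj : {in S &, injective w}.

Lemma card_above_inj : {in S &, injective (fun x => #|above x|)}.
Proof.
move=> x y xS yS /= Exy.
case: (ltngtP (w x) (w y)) => [xy|yx|]; last exact: w_inj.
- by have := proper_card (above_proper yS xy); rewrite Exy ltnn.
- by have := proper_card (above_proper xS yx); rewrite Exy ltnn.
Qed.

Lemma card_few_above m : #|[set x in S | #|above x| < m]| <= m.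
Proof.
(* All of X but its lightest element lies above that element. *)
set X := [set x in S | _].
have [->|[x0 x0X]] := set_0Vmem X; first by rewrite cards0.
have [x xXm xmin] := arg_minnP w x0X; have xX : x \in X := xXm.
have /[!inE] /andP[xS xm] := xX.
rewrite (cardsD1 x) xX add1n.
apply: leq_trans xm; rewrite ltnS; apply: subset_leq_card.
apply/subsetP => y /setD1P [yx yX]; have /[!inE] /andP[yS _] := yX.
rewrite yS ltn_neqAle xmin // andbT.
by apply: contraNneq yx => /(w_inj xS yS) ->.
Qed.

End Weights.

Lemma card_few_below (T : finType) (w : T -> nat) (S : {set T}) m :
  {in S &, injective w} -> #|[set x in S | #|below w S x| < m]| <= m.
Proof.
(* Reversing the weights exchanges below and above. *)
move=> w_inj; pose N := \max_(y in S) w y.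
have wN y : y \in S -> w y <= N by move=> yS; apply: leq_bigmax_cond.
have belowE x : x \in S -> below w S x = above (fun y => N - w y) S x.
  move=> xS; apply/setP => y; rewrite !inE; case yS: (y \in S) => //=.
  by have := wN x xS; have := wN y yS; lia.
have -> : [set x in S | #|below w S x| < m] =
          [set x in S | #|above (fun y => N - w y) S x| < m].
  by apply/setP => x; rewrite !inE; case xS: (x \in S); rewrite //= belowE.
apply: card_few_above => x y xS yS /= Exy; apply: w_inj => //.
by have := wN x xS; have := wN y yS; lia.
Qed.

Lemma card_window_le (T : finType) (w : T -> nat) (S : {set T}) a b :
  {in S &, injective w} ->
  #|S| <= #|[set x in S | (a <= #|above w S x|) && (b <= #|below w S x|)]| + a + b.
Proof.
move=> w_inj; set Good := [set x in S | _].
have S_sub : S \subset Good :|: [set x in S | #|above w S x| < a]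
                            :|: [set x in S | #|below w S x| < b].
  apply/subsetP => x xS; rewrite !inE xS /=.
  by case: leqP; case: leqP; rewrite ?orbT.
apply: leq_trans (subset_leq_card S_sub) _.
apply: leq_trans (leq_card_setU _ _).1 _; rewrite leq_add //.
  apply: leq_trans (leq_card_setU _ _).1 _; rewrite leq_add //.
  exact: card_few_above.
exact: card_few_below.
Qed.

Section IthMember.

Variables (n : nat) (Q : {set {set 'I_n}}).
Hypothesis card_inj : {in Q &, injective (fun A : {set 'I_n} => #|A|)}.

Lemma ith_member_above i : 0 < i <= #|Q| ->
  ith_member Q i \in Q /\ #|above (fun A : {set 'I_n} => #|A|) Q (ith_member Q i)| = i.-1.
Proof.
move=> /andP[i_gt0 iQ]; rewrite /ith_member; set s := as_chain Q.
have size_s : size s = #|Q| by rewrite size_sort cardE.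
have mem_s : s =i Q by move=> A; rewrite mem_sort mem_enum.
have uniq_s : uniq s by rewrite sort_uniq enum_uniq.
pose r (A B : {set 'I_n}) := #|B| <= #|A|.
have sorted_s : sorted r s by apply: sort_sorted => A B; apply: leq_total.
have r_trans : transitive r by move=> B A C /[swap]; apply: leq_trans.
have r_nth := sorted_leq_nth r_trans (fun A => leqnn #|A|) set0 sorted_s.
have i_lt_s : i.-1 < size s by rewrite size_s; lia.
set G := nth set0 s i.-1.
have GQ : G \in Q by rewrite -mem_s mem_nth.
split=> //.
have lt_j (j : 'I_i.-1) : j < size s by apply: ltn_trans i_lt_s.
have -> : above (fun A : {set 'I_n} => #|A|) Q G = [set nth set0 s j | j : 'I_i.-1].
  apply/setP => H; rewrite inE; apply/andP/imsetP => [[HQ GH]|[j _ ->]].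
    have lt_H : index H s < size s by rewrite index_mem mem_s.
    have [lt_Hi|] := ltnP (index H s) i.-1.
      by exists (Ordinal lt_Hi); rewrite //= nth_index ?mem_s.
    by move/(r_nth _ _ i_lt_s lt_H); rewrite /r nth_index ?mem_s // leqNgt GH.
  have jQ : nth set0 s j \in Q by rewrite -mem_s mem_nth.
  have le_Gj : #|G| <= #|nth set0 s j| := r_nth _ _ (lt_j j) i_lt_s (ltnW (ltn_ord j)).
  split=> //; rewrite ltn_neqAle le_Gj andbT.
  apply: contraTneq (ltn_ord j) => /(card_inj GQ jQ) /eqP.
  by rewrite nth_uniq ?lt_j // => /eqP <-; rewrite ltnn.
rewrite card_in_imset ?card_ord // => j k _ _ /eqP.
by rewrite nth_uniq ?lt_j // => /eqP /val_inj.
Qed.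

Lemma ith_memberE i F : 0 < i <= #|Q| -> F \in Q ->
  #|above (fun A : {set 'I_n} => #|A|) Q F| = i.-1 -> ith_member Q i = F.
Proof.
move=> iQ FQ aboveF; have [GQ aboveG] := ith_member_above iQ.
by apply: card_above_inj card_inj _ _ GQ FQ _; rewrite aboveG aboveF.
Qed.

End IthMember.

Definition prefix_set n k : {set 'I_n} := [set j : 'I_n | j < k].

Lemma card_prefix_set n k : k <= n -> #|prefix_set n k| = k.
Proof.
move=> le_kn; have -> : prefix_set n k = widen_ord le_kn @: [set: 'I_k].
  apply/setP => j; rewrite inE; apply/idP/imsetP => [lt_jk|[l _ ->]].
    by exists (Ordinal lt_jk); last exact: val_inj.
  by case: l.
rewrite card_imset ?cardsT ?card_ord // => l m /(congr1 val) eq_lm; exact: val_inj.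
Qed.

Lemma prefix_setS n k (lt_kn : k < n) :
  prefix_set n k.+1 = Ordinal lt_kn |: prefix_set n k.
Proof. by apply/setP => j; rewrite !inE ltnS leq_eqVlt -val_eqE. Qed.

Section NestedSets.

Variables (T : finType) (n : nat) (D : nat -> {set T}).
Hypotheses (D0 : D 0 = set0) (Dn : D n = setT) (card_T : #|T| = n).
Hypothesis D_proper : forall k, k < n -> D k \proper D k.+1.

Lemma card_nested k : k <= n -> #|D k| = k.
Proof.
have grow d j : j + d <= n -> #|D j| + d <= #|D (j + d)|.
  elim: d => [|d IHd] le_jdn; first by rewrite !addn0.
  have lt_jdn : j + d < n by rewrite addnS in le_jdn.
  have := proper_card (D_proper lt_jdn); have := IHd (ltnW lt_jdn).
  by rewrite !addnS; lia.
move=> le_kn; apply/eqP; rewrite eqn_leq; apply/andP; split.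
  by have := grow (n - k) k; rewrite subnKC // Dn cardsT card_T; lia.
by have := grow k 0; rewrite D0 cards0; apply.
Qed.

Lemma nested_sets_image :
  exists2 f : 'I_n -> T, injective f & forall k, k <= n -> D k = f @: prefix_set n k.
Proof.
have step (j : 'I_n) : exists x, D j.+1 :\: D j = [set x].
  apply/cards1P; have /proper_sub/setIidPr sub_j := D_proper (ltn_ord j).
  by rewrite cardsD sub_j !card_nested ?subSnn //; apply: ltnW.
have [f Df] := fin_all_exists step.
have Dk k : k <= n -> D k = f @: prefix_set n k.
  elim: k => [|k IHk] lt_kn.
    by rewrite D0 (_ : prefix_set n 0 = set0) ?imset0 //; apply/setP => j; rewrite !inE.
  have /proper_sub/setIidPr sub_k := D_proper lt_kn.
  rewrite prefix_setS imsetU1 -IHk 1?ltnW // -[D k.+1](setID _ (D k)) sub_k.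
  by rewrite (Df (Ordinal lt_kn)) setUC.
exists f => // j l; have /imset_injP : #|f @: prefix_set n n| == #|prefix_set n n|.
  by rewrite -Dk // Dn cardsT card_T card_prefix_set.
by apply; rewrite inE ltn_ord.
Qed.

End NestedSets.

Definition perm_chain n (s : {perm 'I_n}) : chainT n :=
  [set s @: prefix_set n k | k : 'I_n.+1].

Lemma full_chain_perm n (chi : chainT n) :
  full_chain chi -> exists s : {perm 'I_n}, chi = perm_chain s.
Proof.
case/existsP => C /and4P[/eqP C0 /eqP Cn /forallP C_proper /eqP ->].
pose D (k : nat) : {set 'I_n} := C (inord k).
have CE (k : 'I_n.+1) : C k = D k by rewrite /D inord_val.
have [||||f f_inj Df] := @nested_sets_image _ n D.
- by rewrite -C0 CE.
- by rewrite -Cn CE.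
- exact: card_ord.
- move=> k lt_kn; have := C_proper (Ordinal lt_kn).
  by rewrite (CE (widen_ord _ _)) (CE (lift _ _)).
exists (perm f_inj); apply: eq_imset => k.
rewrite (CE k) Df; last by rewrite -ltnS.
by apply: eq_imset => j; rewrite permE.
Qed.

Lemma card_perm_prefix n (s : {perm 'I_n}) (k : 'I_n.+1) :
  #|s @: prefix_set n k| = k.
Proof.
rewrite card_imset; last exact: perm_inj.
by rewrite card_prefix_set // -ltnS.
Qed.

Lemma full_chain_card_inj n (chi : chainT n) :
  full_chain chi -> {in chi &, injective (fun A : {set 'I_n} => #|A|)}.
Proof.
case/full_chain_perm => s -> _ _ /imsetP[k _ ->] /imsetP[l _ ->].
by rewrite !card_perm_prefix => /val_inj ->.
Qed.

Section ChainsThrough.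

Variable n : nat.

Definition chains_through (F : {set 'I_n}) : {set chainT n} :=
  [set chi | full_chain chi && (F \in chi)].

Definition perms_through (F : {set 'I_n}) : {set {perm 'I_n}} :=
  [set s : {perm 'I_n} | s @: prefix_set n #|F| == F].

Lemma card_chains_through_le F : #|chains_through F| <= #|perms_through F|.
Proof.
apply: leq_trans (leq_imset_card (@perm_chain n) _); apply: subset_leq_card.
apply/subsetP => chi /[!inE] /andP[/full_chain_perm[s ->] /imsetP[k _ ->]].
by apply/imsetP; exists s; rewrite // inE card_perm_prefix.
Qed.

Lemma card_perms_through_le (F G : {set 'I_n}) :
  #|F| = #|G| -> #|perms_through F| <= #|perms_through G|.
Proof.
move=> FG; have [p pFG] := exists_perm_imset FG.
rewrite -(card_imset _ (mulIg p)); apply: subset_leq_card.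
apply/subsetP => _ /imsetP[s /[!inE] /eqP sF ->].
rewrite -FG -pFG; apply/eqP; rewrite -[in RHS]sF -imset_comp.
by apply: eq_imset => x; rewrite permM.
Qed.

Lemma sum_card_perms_through k :
  \sum_(G : {set 'I_n} | #|G| == k) #|perms_through G| <= n`!.
Proof.
pose fiber G := [set s : {perm 'I_n} | s @: prefix_set n k == G].
have -> : n`! = \sum_G #|fiber G|.
  have := sum_card_sections
    (fun (G : {set 'I_n}) (s : {perm 'I_n}) => s @: prefix_set n k == G).
  move=> /= ->; rewrite -card_Sn -cardsT -sum1dep_card; apply: eq_bigr => s _.
  by rewrite -(cards1 (s @: prefix_set n k)); apply: eq_card => G; rewrite !inE eq_sym.
rewrite [X in _ <= X](bigID (fun G : {set 'I_n} => #|G| == k)) /=.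
apply: leq_trans (leq_addr _ _); apply/eq_leq/eq_bigr => G /eqP Gk.
by apply: eq_card => s; rewrite !inE Gk.
Qed.

Lemma card_chains_through F : #|chains_through F| * 'C(n, #|F|) <= n`!.
Proof.
apply: leq_trans (sum_card_perms_through #|F|).
rewrite mulnC -[n in 'C(n, _)]card_ord -card_draws -sum1dep_card big_distrl.
apply: leq_sum => G /eqP GF; rewrite /= mul1n.
exact: leq_trans (card_chains_through_le F) (card_perms_through_le (esym GF)).
Qed.

End ChainsThrough.

Section MarkedChains.

Variables (n q i : nat) (Fam : {set {set 'I_n}}) (T : {set (chainT n * {set 'I_n})}).
Hypotheses (T_marked : marked_family Fam T) (i_range : 0 < i <= q).

Lemma mem_Lchi chi F :
  F \in Lchi Fam (power T q) i chi -> (F \in Fam) && ((chi, F) \in T).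
Proof.
rewrite inE => /andP[-> /existsP[Q /andP[/[!inE] /andP[/subsetP QT /eqP Qq] /eqP <-]]] /=.
have /QT : ith_member Q i \in Q; last by rewrite inE.
rewrite /ith_member -mem_enum -(mem_sort (fun A B : {set 'I_n} => #|B| <= #|A|)) mem_nth //.
by rewrite size_sort -cardE Qq; lia.
Qed.

Lemma Tsec_card_inj chi : full_chain chi ->
  {in Tsec T chi &, injective (fun A : {set 'I_n} => #|A|)}.
Proof.
move=> /full_chain_card_inj chi_inj A B /[!inE] /T_marked[_ _ Achi].
by move=> /T_marked[_ _ Bchi]; apply: chi_inj.
Qed.

Lemma Lchi_window chi F : full_chain chi -> F \in Tsec T chi ->
  i.-1 <= #|above (fun A : {set 'I_n} => #|A|) (Tsec T chi) F| ->
  q - i <= #|below (fun A : {set 'I_n} => #|A|) (Tsec T chi) F| ->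
  F \in Lchi Fam (power T q) i chi.
Proof.
move=> chi_full FS; set S := Tsec T chi; move=> /exists_subset_card[B B_above cardB].
move=> /exists_subset_card[C C_below cardC].
have B_gt H : H \in B -> #|F| < #|H| by move/(subsetP B_above); rewrite inE => /andP[].
have C_lt H : H \in C -> #|H| < #|F| by move/(subsetP C_below); rewrite inE => /andP[].
pose Q := F |: (B :|: C).
have QS : Q \subset S.
  apply/subsetP => H /setU1P[-> //|/setUP[/(subsetP B_above)|/(subsetP C_below)]].
    by rewrite inE => /andP[].
  by rewrite inE => /andP[].
have FBC : F \notin B :|: C.
  by apply/setUP => -[/B_gt|/C_lt]; rewrite ltnn.
have disjBC : [disjoint B & C].
  rewrite disjoints_subset; apply/subsetP => H /B_gt FH.
  by rewrite inE; apply/negP => /C_lt; lia.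
have cardQ : #|Q| = q.
  have [_] := leq_card_setU B C; rewrite disjBC => /eqP cardBC.
  by rewrite cardsU1 FBC cardBC cardB cardC; lia.
have aboveQ : above (fun A : {set 'I_n} => #|A|) Q F = B.
  apply/setP => H; rewrite inE; apply/andP/idP => [[HQ FH]|HB].
    by case/setU1P: HQ FH => [->|/setUP[//|/C_lt]]; [rewrite ltnn | lia].
  by split; [rewrite !inE HB orbT | exact: B_gt].
have Q_inj : {in Q &, injective (fun A : {set 'I_n} => #|A|)}.
  by move=> A1 A2 /(subsetP QS) A1S /(subsetP QS) A2S; apply: (Tsec_card_inj chi_full).
have FQ : F \in Q by rewrite !inE eqxx.
have /[!inE] /T_marked[_ FFam _] := FS.
rewrite FFam; apply/existsP; exists Q.
by rewrite inE QS cardQ eqxx /= (ith_memberE Q_inj _ FQ) ?cardQ ?aboveQ ?cardB.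
Qed.

Lemma card_Tsec_le chi : full_chain chi -> q <= #|Tsec T chi| ->
  #|Tsec T chi| <= q * #|Lchi Fam (power T q) i chi|.
Proof.
move=> chi_full q_le.
have := card_window_le (i.-1) (q - i) (Tsec_card_inj chi_full).
set Good := [set F in _ | _]; have Good_sub : Good \subset Lchi Fam (power T q) i chi.
  by apply/subsetP => F; rewrite inE => /andP[FS /andP[]]; apply: Lchi_window.
have := subset_leq_card Good_sub; move: q_le.
set t := #|Tsec T chi|; set g := #|Good|; set l := #|Lchi _ _ _ _|.
(* t <= l + q - 1 and q <= t give q * l >= q * (t - q + 1) = t + (q - 1) * (t - q). *)
nia.
Qed.

Lemma card_marked_le : q_strong q T ->
  #|T| <= q * \sum_chi #|[set F | full_chain chi && (F \in Lchi Fam (power T q) i chi)]|.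
Proof.
move=> T_strong; rewrite card_set_pair big_distrr /=; apply: leq_sum => chi _.
have [Tchi0|[F FT]] := set_0Vmem (Tsec T chi); first by rewrite -/(Tsec T chi) Tchi0 cards0.
have chi_full : full_chain chi by have /[!inE] /T_marked[] := FT.
apply: leq_trans (card_Tsec_le chi_full (T_strong _ _)) _; first by apply/set0Pn; exists F.
rewrite leq_mul2l; apply/orP; right.
by apply/subset_leq_card/subsetP => G; rewrite inE chi_full.
Qed.

Lemma sum_card_Lchi_le :
  \sum_chi #|[set F | full_chain chi && (F \in Lchi Fam (power T q) i chi)]| <=
  \sum_(F in Lall Fam (power T q) i) #|chains_through F|.
Proof.
have := sum_card_sections (fun chi F => full_chain chi && (F \in Lchi Fam (power T q) i chi)).
move=> /= ->; rewrite [X in _ <= X]big_mkcond /=; apply: leq_sum => F _.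
case: ifP => [_|FL].
  apply/subset_leq_card/subsetP => chi; rewrite [chi \in [set _ | _]]inE.
  by case/andP=> chi_full /mem_Lchi/andP[_ /T_marked[_ _ Fchi]]; rewrite inE chi_full.
rewrite leqn0 cards_eq0; apply/eqP/setP => chi; rewrite in_set0 [chi \in [set _ | _]]inE.
apply/negbTE/andP => -[chi_full FLchi].
suff : F \in Lall Fam (power T q) i by rewrite FL.
by apply/bigcupP; exists chi.
Qed.

Lemma card_marked_mul_le m : q_strong q T ->
  (forall F, F \in Fam -> m <= 'C(n, #|F|)) ->
  #|T| * m <= q * #|Lall Fam (power T q) i| * n`!.
Proof.
move=> T_strong m_le; set L := Lall Fam (power T q) i.
have L_Fam F : F \in L -> F \in Fam by case/bigcupP => chi _ /mem_Lchi/andP[].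
have sum_le : (\sum_(F in L) #|chains_through F|) * m <= #|L| * n`!.
  rewrite big_distrl -sum_nat_const /=; apply: leq_sum => F FL.
  by apply: leq_trans (card_chains_through F); rewrite leq_mul2l m_le ?orbT ?L_Fam.
have T_le : #|T| <= q * \sum_(F in L) #|chains_through F|.
  by apply: leq_trans (card_marked_le T_strong) _; rewrite leq_mul2l sum_card_Lchi_le orbT.
by rewrite -!mulnA (leq_trans (leq_mul T_le (leqnn m))) // -mulnA leq_mul2l sum_le orbT.
Qed.

End MarkedChains.

Local Open Scope ring_scope.

Theorem lemma4p3 (R : realFieldType) (n q : nat) (eps : R)
  (Fam : {set {set 'I_n}}) (T : {set (chainT n * {set 'I_n})}) :
  (0 < q)%N -> 0 < eps ->
  marked_family Fam T -> q_strong q T ->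
  eps * (n`!)%:R <= (#|T|)%:R ->
  forall i : nat, (1 <= i <= q)%N ->
  forall F0 : {set 'I_n}, F0 \in Fam ->
  (forall F, F \in Fam -> ('C(n, #|F0|) <= 'C(n, #|F|))%N) ->
  (#|Lall Fam (power T q) i|)%:R >= eps / q%:R * ('C(n, #|F0|))%:R.
Proof.
move=> q_gt0 eps_gt0 T_marked T_strong T_large i i_range F0 _ F0_min.
have := card_marked_mul_le T_marked i_range T_strong F0_min.
rewrite -(ler_nat R) !natrM => card_le.
have fact_pos : 0 < (n`!)%:R :> R by rewrite ltr0n fact_gt0.
rewrite mulrAC ler_pdivrMr ?ltr0n // -(ler_pM2r fact_pos) mulrAC.
apply: le_trans (le_trans (_ : _ <= #|T|%:R * _) card_le) _.
  by rewrite ler_wpM2r ?ler0n.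
by rewrite [_ * q%:R]mulrC.
Qed.
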